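(* Let $\xi$ and $\eta_j$ be even unimodal probability densities on $\mathbb R$, $n>0$, $\nu_j>0$, and for $i=0,1$ let $I_{ij}(d)=\int_{-\infty}^\infty x^i\sqrt n\,\eta_j(\sqrt n(x-d))\,\nu_j\xi(\nu_jx)\,dx$. If $|I_{1j}(d)|<\infty$ for all $j$ and $d$, then $|I_{1j}(d)/I_{0j}(d)|\le|d|$ for all $j$ and all real $d$.
   Context: A density is unimodal (and even) here if it is symmetric about $0$ and nonincreasing on $[0,\infty)$. *)

From HB Require Import structures.
From mathcomp Require Import all_boot all_order all_algebra.
From mathcomp Require Import all_classical all_reals all_analysis.
Set Implicit Arguments. Unset Strict Implicit. Unset Printing Implicit Defensive.
Import Order.TTheory GRing.Theory Num.Theory.
Local Open Scope ring_scope.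
Local Open Scope classical_set_scope.

Definition even_unimodal_density (R : realType) (f : R -> R) : Prop :=
  [/\ measurable_fun setT f,
      (forall x, 0 <= f x),
      (\int[@lebesgue_measure R]_x (f x)%:E = 1)%E,
      (forall x, f (- x) = f x) &
      (forall x y, 0 <= x -> x <= y -> f y <= f x)].

Definition kern (R : realType) (xi eta : R -> R) (n nu d x : R) : R :=
  Num.sqrt n * eta (Num.sqrt n * (x - d)) * (nu * xi (nu * x)).

Definition Iint (R : realType) (i : nat) (xi eta : R -> R) (n nu d : R) : R :=
  Rintegral (@lebesgue_measure R) setT (fun x => x ^+ i * kern xi eta n nu d x).

From HB Require Import structures.
From mathcomp Require Import all_boot all_order all_algebra.
From mathcomp Require Import all_classical all_reals all_analysis.
From mathcomp Require Import measurable_realfun ring lra.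
Set Implicit Arguments.
Unset Strict Implicit.
Unset Printing Implicit Defensive.
Import Order.TTheory GRing.Theory Num.Theory.
Local Open Scope ring_scope.
Local Open Scope classical_set_scope.

(** Write [K x = g (x - d) * h x] for the integrand of [I_0], with [g] and [h]
   nonnegative, even and nonincreasing in [|x|]. Since Lebesgue measure is
   invariant under [x |-> c - x], a function whose values at [x] and [c - x]
   always sum to something nonnegative has a nonnegative integral. Pairing
   [x] with [2d - x] shows [0 <= d^2 I_0 - d I_1], pairing [x] with [-x] shows
   [0 <= d^2 I_0 + d I_1]; in both cases the pointwise sum is a nonnegative
   multiple of [(b^2 - a^2) (f a - f b)] for [f = h], resp. [f = g]. Hence
   [|d| |I_1| <= d^2 I_0], and for [d = 0] the oddness of [x K x] gives
   [I_1 = 0]. *)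

Section reflection.
Context {R : realType}.
Local Notation mu := (@lebesgue_measure R).

Definition reflection (c : R) : measurableTypeR R -> measurableTypeR R :=
  fun x => c - x.

Lemma measurable_reflection c : measurable_fun setT (reflection c).
Proof. by apply: measurable_funB => //; exact: measurable_cst. Qed.

Lemma reflectionK c : involutive (reflection c).
Proof. by move=> x; rewrite /reflection opprB addrC subrK. Qed.

Lemma lebesgue_measure_reflection c A : measurable A ->
  mu (reflection c @^-1` A) = mu A.
Proof.
move=> mA; symmetry.
apply: (@lebesgue_measure_unique _ (pushforward mu (reflection c))) mA.
  exact: measurable_reflection.
move=> ? _ [[a b] _ <-]; rewrite /= /pushforward /=.
have -> : reflection c @^-1` `]a, b] = `[c - b, c - a[%classic.
  apply/seteqP; split => x /=; rewrite /reflection !in_itv /=;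
    by move=> /andP[? ?]; apply/andP; split; lra.
rewrite !lebesgue_measure_itv /= !lte_fin ltrD2l ltrN2.
by case: ifP => // _; congr EFin; lra.
Qed.

Lemma integral_pushforward_reflection c (f : R -> \bar R) :
  (\int[pushforward mu (reflection c)]_x f x = \int[mu]_x f x)%E.
Proof.
apply: eq_measure_integral => [|? A mA _]; first exact: measurable_reflection.
exact: lebesgue_measure_reflection.
Qed.

Lemma integrable_reflection c (f : R -> \bar R) :
  mu.-integrable setT f -> mu.-integrable setT (f \o reflection c).
Proof.
move=> fi; have /integrableP[mf _] := fi.
have mfr : measurable_fun setT (f \o reflection c).
  exact: measurableT_comp mf (measurable_reflection c).
have : (pushforward mu (reflection c)).-integrable setT (f \o reflection c).
  apply: (integrable_pushforward (measurable_reflection c) mfr) => //.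
  rewrite preimage_setT; move: fi.
  by apply: eq_integrable => // x _; rewrite /= reflectionK.
move=> /integrableP[_]; rewrite integral_pushforward_reflection => fin.
exact/integrableP.
Qed.

Lemma integral_reflection c (f : R -> \bar R) : mu.-integrable setT f ->
  (\int[mu]_x f (reflection c x) = \int[mu]_x f x)%E.
Proof.
move=> fi; have /integrableP[mf _] := fi.
rewrite -(integral_pushforward_reflection c (f \o reflection c)).
rewrite integral_pushforward ?preimage_setT //.
- by apply: eq_integral => x _; rewrite /= reflectionK.
- exact: measurable_reflection.
- exact: measurableT_comp mf (measurable_reflection c).
- by move: fi; apply: eq_integrable => // x _; rewrite /= reflectionK.
Qed.

Lemma Rintegral_reflection c (f : R -> R) : mu.-integrable setT (EFin \o f) ->
  \int[mu]_x f (c - x) = \int[mu]_x f x.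
Proof. by move=> fi; congr fine; exact: integral_reflection. Qed.

Lemma Rintegral_ge0_reflection c (f : R -> R) :
  mu.-integrable setT (EFin \o f) -> (forall x, 0 <= f x + f (c - x)) ->
  0 <= \int[mu]_x f x.
Proof.
move=> fi f_pair; have fri := integrable_reflection c fi.
have : 0 <= \int[mu]_x (f x + f (c - x)) by apply: Rintegral_ge0 => x _.
by rewrite RintegralD // Rintegral_reflection //; lra.
Qed.

End reflection.

Lemma integrable_Rintegral_neq0 {R : realType} d (T : measurableType d)
    (mu : {measure set T -> \bar R}) (f : T -> R) :
  measurable_fun setT f -> (forall x, 0 <= f x) ->
  \int[mu]_x f x != 0 -> mu.-integrable setT (EFin \o f).
Proof.
move=> mf f0 If; apply/integrableP; split; first exact/measurable_EFinP.
under eq_integral do rewrite gee0_abs ?lee_fin //.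
by rewrite ltey; apply: contra If => /eqP fi; rewrite /Rintegral fi.
Qed.

Section abs_nonincreasing.
Context {R : realType}.

Definition abs_nonincreasing (f : R -> R) :=
  forall x y, `|x| <= `|y| -> f y <= f x.

Lemma abs_nonincreasingN f : abs_nonincreasing f -> forall x, f (- x) = f x.
Proof. by move=> fm x; apply/le_anti; rewrite !fm ?normrN. Qed.

Lemma abs_nonincreasing_cross f : abs_nonincreasing f ->
  forall a b, 0 <= (b ^+ 2 - a ^+ 2) * (f a - f b).
Proof.
move=> fm a b; rewrite -(real_normK (num_real a)) -(real_normK (num_real b)).
have a0 := normr_ge0 a; have b0 := normr_ge0 b.
have [ab|ba] := leP `|a| `|b|.
- by apply: mulr_ge0; [nra | rewrite subr_ge0 fm].
- by apply: mulr_le0; [nra | rewrite subr_le0 fm // ltW].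
Qed.

Lemma abs_nonincreasing_scale f k : 0 <= k -> abs_nonincreasing f ->
  abs_nonincreasing (fun x => k * f (k * x)).
Proof.
by move=> k0 fm x y xy; rewrite ler_wpM2l // fm // !normrM ler_wpM2l ?normr_ge0.
Qed.

Lemma even_unimodal_abs_nonincreasing f :
  even_unimodal_density f -> abs_nonincreasing f.
Proof.
have even_norm z : (forall x, f (- x) = f x) -> f z = f `|z|.
  by move=> fe; have [z0|z0] := leP 0 z; [rewrite ger0_norm | rewrite ltr0_norm ?fe].
by case=> _ _ _ fe fm x y xy; rewrite (even_norm x) // (even_norm y) // fm.
Qed.

Lemma measurable_fun_scale f k : measurable_fun setT f ->
  measurable_fun setT (fun x : R => k * f (k * x)).
Proof.
move=> mf; apply: measurable_funM; first exact: measurable_cst.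
by apply: measurableT_comp mf _; apply: measurable_funM => //; exact: measurable_cst.
Qed.

End abs_nonincreasing.

Section moments.
Context {R : realType}.
Local Notation mu := (@lebesgue_measure R).
Variables (g h : R -> R) (d : R).
Hypotheses (g0 : forall x, 0 <= g x) (h0 : forall x, 0 <= h x).
Hypotheses (gm : abs_nonincreasing g) (hm : abs_nonincreasing h).

Let K x := g (x - d) * h x.
Let I0 := \int[mu]_x K x.
Let I1 := \int[mu]_x (x * K x).

Let K_ge0 x : 0 <= K x. Proof. exact: mulr_ge0. Qed.

Let I0_ge0 : 0 <= I0. Proof. by apply: Rintegral_ge0 => x _. Qed.

Section integrable_kernel.
Hypotheses (iK : mu.-integrable setT (EFin \o K))
  (iXK : mu.-integrable setT (EFin \o (fun x => x * K x))).

Lemma moment_combination_ge0 a b c :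
  (forall x, 0 <= a * K x + b * (x * K x) +
                (a * K (c - x) + b * ((c - x) * K (c - x)))) ->
  0 <= a * I0 + b * I1.
Proof.
have iZ e (f : R -> R) : mu.-integrable setT (EFin \o f) ->
    mu.-integrable setT (EFin \o (fun x => e * f x)).
  move=> /(integrableZl measurableT e).
  by apply: eq_integrable => // x _; rewrite /= EFinM.
have iaK := iZ a _ iK; have ibXK := iZ b _ iXK.
have iF : mu.-integrable setT (EFin \o (fun x => a * K x + b * (x * K x))).
  move: (integrableD measurableT iaK ibXK).
  by apply: eq_integrable => // x _; rewrite /= EFinD.
move=> pair_ge0; rewrite /I0 /I1 -!RintegralZl // -RintegralD //.
exact: Rintegral_ge0_reflection pair_ge0.
Qed.

Lemma moment_combinationB_ge0 : 0 <= d ^+ 2 * I0 - d * I1.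
Proof.
rewrite -mulNr; apply: (moment_combination_ge0 (c := 2 * d)) => x.
have gE : g (2 * d - x - d) = g (x - d).
  by rewrite -(abs_nonincreasingN gm (x - d)); congr g; ring.
have := abs_nonincreasing_cross hm x (2 * d - x); have := g0 (x - d).
rewrite /K gE; nra.
Qed.

Lemma moment_combinationD_ge0 : 0 <= d ^+ 2 * I0 + d * I1.
Proof.
apply: (moment_combination_ge0 (c := 0)) => x.
have gE : g (0 - x - d) = g (x + d).
  by rewrite -(abs_nonincreasingN gm (x + d)); congr g; ring.
have hE : h (0 - x) = h x by rewrite sub0r (abs_nonincreasingN hm).
have := mulr_ge0 (h0 x) (abs_nonincreasing_cross gm (x - d) (x + d)).
have := mulr_ge0 (h0 x) (mulr_ge0 (sqr_ge0 d) (addr_ge0 (g0 (x - d)) (g0 (x + d)))).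
rewrite /K gE hE; nra.
Qed.

Lemma first_moment_eq0 : d = 0 -> I1 = 0.
Proof.
move=> d0; have Keven x : K (0 - x) = K x.
  by rewrite /K d0 !subr0 sub0r (abs_nonincreasingN gm) (abs_nonincreasingN hm).
have odd_pair b : forall x, 0 <= 0 * K x + b * (x * K x) +
    (0 * K (0 - x) + b * ((0 - x) * K (0 - x))).
  by move=> x; rewrite Keven; lra.
have := moment_combination_ge0 (odd_pair 1).
have := moment_combination_ge0 (odd_pair (-1)).
lra.
Qed.

Lemma norm_first_moment_le : `|I1| <= `|d| * I0.
Proof.
have [d0|dn0] := eqVneq d 0.
  by rewrite first_moment_eq0 // normr0 mulr_ge0.
have d_gt0 : 0 < `|d| by rewrite normr_gt0.
rewrite -(ler_pM2l d_gt0) mulrA -expr2 real_normK ?num_real // -normrM.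
have := moment_combinationB_ge0; have := moment_combinationD_ge0.
rewrite ler_norml; lra.
Qed.

End integrable_kernel.

Lemma norm_moment_ratio_le : measurable_fun setT g -> measurable_fun setT h ->
  mu.-integrable setT (EFin \o (fun x => x * K x)) -> `|I1 / I0| <= `|d|.
Proof.
(* If [I0 = 0] the quotient is [0] by the convention [x / 0 = 0]; otherwise
   [I0] is not the junk value [fine +oo = 0], so [K] is integrable. *)
move=> mg mh iXK; have [->|I0n0] := eqVneq I0 0.
  by rewrite invr0 mulr0 normr0.
have mK : measurable_fun setT K.
  apply: measurable_funM mh; apply: measurableT_comp mg _.
  by apply: measurable_funB => //; exact: measurable_cst.
have iK := integrable_Rintegral_neq0 (mu := mu) mK K_ge0 I0n0.
rewrite normrM normfV (ger0_norm I0_ge0) ler_pdivrMr ?lt_def ?I0n0 //.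
exact: norm_first_moment_le.
Qed.

End moments.

Theorem lemma1 (R : realType) (J : Type) (xi : R -> R) (eta : J -> R -> R)
  (n : R) (nu : J -> R) :
  even_unimodal_density xi ->
  (forall j, even_unimodal_density (eta j)) ->
  0 < n ->
  (forall j, 0 < nu j) ->
  (forall j d, (@lebesgue_measure R).-integrable setT
                 (fun x => (x * kern xi (eta j) n (nu j) d x)%:E)) ->
  forall j d, `| Iint 1 xi (eta j) n (nu j) d / Iint 0 xi (eta j) n (nu j) d | <= `|d|.
Proof.
move=> xi_unimodal eta_unimodal _ nu_gt0 iXK j d.
have [mxi xi_ge0 _ _ _] := xi_unimodal.
have [meta eta_ge0 _ _ _] := eta_unimodal j.
have sqrtn_ge0 := sqrtr_ge0 n; have nu_ge0 := ltW (nu_gt0 j).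
have -> : Iint 1 xi (eta j) n (nu j) d =
    \int[lebesgue_measure]_x (x * kern xi (eta j) n (nu j) d x).
  by apply: eq_Rintegral => x _; rewrite expr1.
have -> : Iint 0 xi (eta j) n (nu j) d =
    \int[lebesgue_measure]_x kern xi (eta j) n (nu j) d x.
  by apply: eq_Rintegral => x _; rewrite expr0 mul1r.
apply: (@norm_moment_ratio_le _ (fun y => Num.sqrt n * eta j (Num.sqrt n * y))
  (fun x => nu j * xi (nu j * x))).
- by move=> y; rewrite mulr_ge0.
- by move=> x; rewrite mulr_ge0.
- exact/abs_nonincreasing_scale/even_unimodal_abs_nonincreasing.
- exact/abs_nonincreasing_scale/even_unimodal_abs_nonincreasing.
- exact: measurable_fun_scale.
- exact: measurable_fun_scale.
- exact: iXK.
Qed.
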